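(* For all integers $d_1,d_2\geq3$, $R_{d_1,d_2}(W_{d_1}\otimes W_{d_2})\leq 2d_1+2d_2-1$.
   Context: Identify $S^d\mathbb{C}^2$ with binary forms of degree $d$ in a basis $\{x,y\}$; $W_d=x^{d-1}y$. The partially symmetric rank $R_{d_1,d_2}(T)$ of $T\in S^{d_1}\mathbb{C}^2\otimes S^{d_2}\mathbb{C}^2$ is the minimal $r$ such that $T=\sum_{i=1}^r v_{i,1}^{\otimes d_1}\otimes v_{i,2}^{\otimes d_2}$ with $v_{i,j}\in\mathbb{C}^2$. *)

From mathcomp Require Import all_boot all_order all_algebra.
Set Implicit Arguments. Unset Strict Implicit. Unset Printing Implicit Defensive.
Import GRing.Theory Num.Theory.
Local Open Scope ring_scope.

(* Tensors in (C^2)^{(x) d1} (x) (C^2)^{(x) d2}, given by their entries in the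
   basis {e_0 = x, e_1 = y}: an entry is indexed by a choice of basis index
   for each of the d1 + d2 tensor factors. *)

Definition tpow (C : nzRingType) (d : nat) (v : 'I_2 -> C) (f : 'I_d -> 'I_2) : C :=
  \prod_(j < d) v (f j).

(* The symmetric tensor W_d corresponding to the binary form x^{d-1} y
   (the W-state sum_j x^{(x)(j)} (x) y (x) x^{(x)(d-1-j)}, i.e. d times the
   symmetrization of x^{d-1} y; the nonzero scalar is irrelevant for rank). *)
Definition Wd (C : nzRingType) (d : nat) (f : 'I_d -> 'I_2) : C :=
  if #|[set j | f j == ord_max]| == 1%N then 1 else 0.

Definition ps_decomp (C : nzRingType) (d1 d2 r : nat)
    (T : ('I_d1 -> 'I_2) -> ('I_d2 -> 'I_2) -> C)
    (a b : 'I_r -> 'I_2 -> C) : Prop :=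
  forall (f : 'I_d1 -> 'I_2) (g : 'I_d2 -> 'I_2),
    T f g = \sum_(i < r) tpow (a i) f * tpow (b i) g.

Definition ps_rank_le (C : nzRingType) (d1 d2 : nat)
    (T : ('I_d1 -> 'I_2) -> ('I_d2 -> 'I_2) -> C) (n : nat) : Prop :=
  exists r : nat, (r <= n)%N /\ exists a b : 'I_r -> 'I_2 -> C, ps_decomp T a b.

Definition WW (C : nzRingType) (d1 d2 : nat) : ('I_d1 -> 'I_2) -> ('I_d2 -> 'I_2) -> C := fun (f : 'I_d1 -> 'I_2) (g : 'I_d2 -> 'I_2) =>
  Wd C f * Wd C g.
Arguments WW C d1 d2 f g : clear implicits.
Arguments ps_rank_le {C d1 d2} T n.

From mathcomp Require Import all_boot all_order all_algebra.
From mathcomp Require Import cyclic separable cyclotomic zify ring.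
Set Implicit Arguments. Unset Strict Implicit. Unset Printing Implicit Defensive.
Import GRing.Theory Num.Theory.
Local Open Scope ring_scope.

(* Put N = d1 + d2 - 1, let z be a primitive N-th root of unity and s_i = 1
   for i < N, s_i = -1 for N <= i < 2N.  For a_i = x + z^i y and
   b_i = x + s_i z^i y, the coefficient of x^{d1-k} y^k (x) x^{d2-l} y^l in
   sum_{i<2N} s_i z^{-2i} a_i^{d1} (x) b_i^{d2} is
   (1 - (-1)^l) sum_{i<N} z^{i(k+l-2)}.  As 0 <= k + l <= N + 1, the
   geometric sum vanishes unless k + l = 2, and the sign factor unless l is
   odd; so only (k, l) = (1, 1) survives, and after scaling by 1/(2N) this
   writes W_{d1} (x) W_{d2} with 2N = 2d1 + 2d2 - 2 terms. *)

Lemma closed_field_prim_root_exists (F : closedFieldType) (n : nat) :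
  n%:R != 0 :> F -> exists z : F, n.-primitive_root z.
Proof.
move=> n_neq0; have n_gt0 : (0 < n)%N by case: n n_neq0; rewrite ?eqxx.
have [r Dp] := closed_field_poly_normal ('X^n - 1 : {poly F}).
rewrite (monicP _) ?monicXnsubC // scale1r in Dp.
have r_unity : all n.-unity_root r by apply/allP=> z; rewrite -root_prod_XsubC -Dp.
have size_r : (n < (size r).+1)%N by rewrite -(size_prod_XsubC r id) -Dp size_XnsubC.
have [|z] := hasP (has_prim_root n_gt0 r_unity _ size_r); last by exists z.
by rewrite -separable_prod_XsubC -Dp separable_Xn_sub_1.
Qed.

Lemma sum_expr_prim_root (R : idomainType) (n e : nat) (z : R) :
  n.-primitive_root z ->
  \sum_(i < n) (z ^+ e) ^+ i = if (n %| e)%N then n%:R else 0.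
Proof.
move=> z_prim; case: ifP => [n_dvd_e | n_ndvd_e].
  have -> : z ^+ e = 1 by apply/eqP; rewrite -(prim_order_dvd z_prim).
  by rewrite (eq_bigr (fun _ => 1)) ?sumr_const ?card_ord // => i _; rewrite expr1n.
have ze_neq1 : z ^+ e - 1 != 0 by rewrite subr_eq0 -(prim_order_dvd z_prim) n_ndvd_e.
apply: (mulfI ze_neq1).
by rewrite -subrX1 mulr0 exprAC (prim_expr_order z_prim) expr1n subrr.
Qed.

Lemma dvdn_addn_subn2 (N s : nat) :
  (2 < N)%N -> (s <= N.+1)%N -> (N %| s + (N - 2))%N = (s == 2).
Proof.
move=> N_gt2 s_le; apply/idP/eqP => [/dvdnP [q Dq] | ->]; last first.
  by rewrite subnKC ?dvdnn //; lia.
by case: q Dq => [|[|q]] Dq; nia.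
Qed.

Definition xyvec (C : nzRingType) (c w : C) : 'I_2 -> C :=
  fun e => c * (if e == ord_max then w else 1).

Definition ydeg (d : nat) (f : 'I_d -> 'I_2) : nat := #|[set j | f j == ord_max]|.

Lemma ydeg_le (d : nat) (f : 'I_d -> 'I_2) : (ydeg f <= d)%N.
Proof. by rewrite -[leqRHS](card_ord d) max_card. Qed.

Lemma tpow_xyvec (C : comNzRingType) (d : nat) (c w : C) (f : 'I_d -> 'I_2) :
  tpow (xyvec c w) f = c ^+ d * w ^+ ydeg f.
Proof.
rewrite /tpow /xyvec /ydeg big_split /= prodr_const card_ord; congr (_ * _).
by rewrite -big_mkcond /= prodr_const cardsE.
Qed.

Lemma Wd_ydeg (C : nzRingType) (d : nat) (f : 'I_d -> 'I_2) :
  Wd C f = (ydeg f == 1)%N%:R.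
Proof. by rewrite /Wd /ydeg; case: eqP. Qed.

Section SignedRootSum.

Variables (C : numFieldType) (N : nat) (z : C).
Hypotheses (N_gt2 : (2 < N)%N) (z_prim : N.-primitive_root z).

Definition sgn (i : nat) : C := if (i < N)%N then 1 else -1.

(* [z ^+ (i * (N - 2))] is z^{-2i}; a d1-th root of [coef i] scales a_i. *)
Definition coef (i : nat) : C := sgn i * z ^+ (i * (N - 2)) / (N + N)%:R.

Lemma sum_sgn_halves (m : nat) (F : nat -> C) :
  (forall i, F (N + i)%N = F i) ->
  \sum_(i < N + N) sgn i ^+ m * F i = (1 + (-1) ^+ m) * \sum_(i < N) F i.
Proof.
move=> F_per; rewrite big_split_ord /= -big_split mulr_sumr.
apply: eq_bigr => i _; rewrite /sgn ltn_ord ltnNge leq_addr F_per /=.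
by rewrite expr1n mulrDl.
Qed.

Lemma signed_root_sum (k l : nat) : (k + l <= N.+1)%N ->
  \sum_(i < N + N) coef i * (z ^+ i) ^+ k * (sgn i * z ^+ i) ^+ l
  = (k == 1)%N%:R * (l == 1)%N%:R.
Proof.
move=> kl_le; set e := (k + l + (N - 2))%N.
have -> : \sum_(i < N + N) coef i * (z ^+ i) ^+ k * (sgn i * z ^+ i) ^+ l
        = \sum_(i < N + N) sgn i ^+ l.+1 * ((z ^+ e) ^+ i / (N + N)%:R).
  apply: eq_bigr => i _; rewrite /coef exprMn -!exprM exprS /e.
  have -> : ((k + l + (N - 2)) * i = i * (N - 2) + i * k + i * l)%N by ring.
  by rewrite !exprD; ring.
rewrite (@sum_sgn_halves l.+1 (fun i => (z ^+ e) ^+ i / (N + N)%:R)); last first.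
  by move=> i; rewrite exprD exprAC (prim_expr_order z_prim) expr1n mul1r.
rewrite -mulr_suml sum_expr_prim_root // dvdn_addn_subn2 //.
have -> : 1 + (-1) ^+ l.+1 = (odd l)%:R *+ 2 :> C.
  by rewrite exprS mulN1r -signr_odd; case: odd => /=; ring.
rewrite -natrM mulnb; case: eqP => [kl2 | kl_neq2] /=; last first.
  by rewrite mul0r mulr0; have -> : (k == 1)%N && (l == 1)%N = false by lia.
have -> : (odd l)%:R *+ 2 * (N%:R / (N + N)%:R) = (odd l)%:R :> C.
  by rewrite natrD; field; rewrite -natrD pnatr_eq0; lia.
by congr (_%:R); clear e; case: l kl2 {kl_le} => [|[|[|l]]] /= kl2; lia.
Qed.

End SignedRootSum.

Lemma ps_decomp_WW (C : numClosedFieldType) (N d1 d2 : nat) (z : C) :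
  (0 < d1)%N -> (2 < N)%N -> (d1 + d2 = N.+1)%N -> N.-primitive_root z ->
  ps_decomp (WW C d1 d2)
    (fun i : 'I_(N + N) => xyvec (d1.-root (coef N z i)) (z ^+ i))
    (fun i : 'I_(N + N) => xyvec 1 (sgn C N i * z ^+ i)).
Proof.
move=> d1_gt0 N_gt2 d12 z_prim f g.
rewrite /WW !Wd_ydeg -(signed_root_sum N_gt2 z_prim); last first.
  by have := ydeg_le f; have := ydeg_le g; lia.
apply: eq_bigr => i _.
by rewrite !tpow_xyvec rootCK // expr1n mul1r.
Qed.

Theorem proposition3p5 (C : numClosedFieldType) (d1 d2 : nat) :
  (3 <= d1)%N -> (3 <= d2)%N ->
  ps_rank_le (WW C d1 d2) (2 * d1 + 2 * d2 - 1).
Proof.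
move=> d1_ge3 d2_ge3; pose N := (d1 + d2 - 1)%N.
have [z z_prim] : exists z : C, N.-primitive_root z.
  by apply: closed_field_prim_root_exists; rewrite pnatr_eq0; lia.
exists (N + N)%N; split; first lia.
by do 2 eexists; apply: ps_decomp_WW z_prim; lia.
Qed.
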